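(* Let $T\in\mathrm{Aut}_1(X,\mathcal{A},\mu)$. If $T$ is conservative, then $\chi(T)=0$.
   Context: $(X,\mathcal{A},\mu)$ is a standard $\sigma$-finite non-atomic measure space. For an invertible nonsingular $T$, $T':=\frac{d\mu\circ T^{-1}}{d\mu}$; $\mathrm{Aut}_1(X,\mathcal{A},\mu)$ is the group of invertible nonsingular $T$ with $T'-1\in L^1(\mu)$, and $\chi(T):=\int_X(T'-1)\,d\mu$. $T$ is conservative if for every $A\in\mathcal A$ with $\mu(A)>0$ there is $n>0$ with $\mu(T^{-n}A\cap A)>0$. *)

From HB Require Import structures.
From mathcomp Require Import all_boot all_order all_algebra.
From mathcomp Require Import all_classical all_reals all_analysis.
From mathcomp Require Import measurable_realfun lebesgue_measure lebesgue_integral.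
Set Implicit Arguments. Unset Strict Implicit. Unset Printing Implicit Defensive.
Import Order.TTheory GRing.Theory Num.Theory.
Local Open Scope classical_set_scope.
Local Open Scope ring_scope.

(* Standard (Borel) measurable space: X is Borel isomorphic to a Borel subset
   of the real line R (with its Borel sigma-algebra). *)
Definition standard_space (d : measure_display) (X : measurableType d)
  (R : realType) : Prop :=
  exists f : X -> R,
    [/\ injective f, measurable_fun [set: X] f, measurable (range f)
      & forall A : set X, measurable A -> measurable (f @` A)].

Definition non_atomic (d : measure_display) (X : measurableType d)
  (R : realType) (mu : set X -> \bar R) : Prop :=
  forall A : set X, measurable A -> (0 < mu A)%E ->
    exists B : set X, [/\ measurable B, B `<=` A, (0 < mu B)%E & (mu B < mu A)%E].

Definition invertible_nonsingular (d : measure_display) (X : measurableType d)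
  (R : realType) (mu : set X -> \bar R) (T Tinv : X -> X) : Prop :=
  [/\ cancel T Tinv, cancel Tinv T,
      measurable_fun [set: X] T, measurable_fun [set: X] Tinv
    & forall A : set X, measurable A -> (mu (T @^-1` A) = 0 <-> mu A = 0)%E].

Definition is_RN_deriv (d : measure_display) (X : measurableType d)
  (R : realType) (nu : set X -> \bar R) (mu : {measure set X -> \bar R})
  (f : X -> \bar R) : Prop :=
  [/\ measurable_fun [set: X] f, (forall x, 0 <= f x)%E
    & forall A : set X, measurable A -> nu A = (\int[mu]_(x in A) f x)%E].

Definition conservative (d : measure_display) (X : measurableType d)
  (R : realType) (mu : set X -> \bar R) (T : X -> X) : Prop :=
  forall A : set X, measurable A -> (0 < mu A)%E ->
    exists n : nat, (0 < n)%N /\ (0 < mu ((iter n T) @^-1` A `&` A))%E.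

From HB Require Import structures.
From mathcomp Require Import all_boot all_order all_algebra.
From mathcomp Require Import all_classical all_reals all_analysis.
From mathcomp Require Import measurable_realfun lebesgue_measure lebesgue_integral.
From mathcomp Require Import lra.
Import Order.TTheory GRing.Theory Num.Theory.
Local Open Scope classical_set_scope.
Local Open Scope ring_scope.

(* Write f := T' - 1.  For S of finite measure, \int_S f = mu (T^-1 S) - mu S.
   Given A of finite measure, the sets S_n := A \/ T^-1 A \/ ... \/ T^-n A
   satisfy S_n <= T^-1 S_n \/ (A \ T^-1 S_n), and by conservativity almost
   no point of A avoids A forever, so mu (A \ T^-1 S_n) --> 0 and
   \int_(S_n) f >= - e for large n.  As A <= S_n, the remaining integral
   \int_(~ S_n) f is bounded by \int_(~ A) |f|, which is small once A
   exhausts X; hence \int f >= 0.  The sets \/_(k <= n) T^k A give the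
   reverse inequality in the same way. *)

Section integral_restriction.
Local Open Scope ereal_scope.
Context {d : measure_display} {X : measurableType d} {R : realType}.
Context {mu : {measure set X -> \bar R}} {f : X -> \bar R}.
Hypothesis intf : mu.-integrable setT f.

Lemma integrable_cst_lty (S : set X) (k : R) : measurable S -> mu S < +oo ->
  mu.-integrable S (cst k%:E).
Proof.
move=> mS muS; apply/integrableP; split; first exact: measurable_cst.
by rewrite integral_cst // lte_mul_pinfty.
Qed.

Lemma integral_abs_restrict_le {A S : set X} : measurable A -> measurable S ->
  A `<=` S ->
  \int[mu]_(x in A) `|f x| + `|\int[mu]_x f x - \int[mu]_(x in S) f x|
    <= \int[mu]_x `|f x|.
Proof.
move=> mA mS AS; have mf : measurable_fun setT f by case/integrableP: intf.
have mabsf : measurable_fun setT (fun x => `|f x|).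
  exact: measurableT_comp mf.
have -> : \int[mu]_x f x - \int[mu]_(x in S) f x = \int[mu]_(x in ~` S) f x.
  rewrite -(setUv S) integral_setU ?setUv //; last by rewrite disj_set2E setICr.
  - rewrite addeAC subee ?add0e //.
    by apply: integrable_fin_num => //; exact: integrableS intf.
  - exact: measurableC.
have -> : \int[mu]_x `|f x| =
    \int[mu]_(x in A) `|f x| + \int[mu]_(x in ~` A) `|f x|.
  rewrite -ge0_integral_setU ?setUv //; first last.
  - by rewrite disj_set2E setICr.
  - exact: measurableC.
apply: leeD => //; apply: le_trans (le_abse_integral _ _ _) _ => //.
- exact: measurableC.
- exact: measurable_funS mf.
apply: ge0_subset_integral => //; try exact: measurableC.
- exact: measurable_funS mabsf.
- by move=> x nSx Ax; exact/nSx/AS.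
Qed.

End integral_restriction.

Section sigma_finite_integral.
Local Open Scope ereal_scope.
Context {d : measure_display} {X : measurableType d} {R : realType}.
Context {mu : {sigma_finite_measure set X -> \bar R}}.

Lemma ge0_integral_le_of_finite_sets (g : X -> \bar R) (c : \bar R) :
  measurable_fun setT g -> (forall x, 0 <= g x) ->
  (forall A, measurable A -> mu A < +oo -> \int[mu]_(x in A) g x <= c) ->
  \int[mu]_x g x <= c.
Proof.
move=> mg g0 gc.
have /sigma_finiteP[F [FT ndF /all_and2[mF muF]]] := sigma_finiteT mu.
have cvgF := @ge0_nondecreasing_set_cvg_integral _ _ _ F g mu ndF mF
  (fun i => measurable_funS measurableT (@subsetT _ _) mg) (fun i x _ => g0 x).
rewrite -FT in cvgF; apply: (cvge_to_le cvgF).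
by apply: nearW => n; exact: gc (mF n) (muF n).
Qed.

Context {f : X -> \bar R}.
Hypothesis intf : mu.-integrable setT f.

Lemma integral_ge0_of_localization :
  (forall A, measurable A -> mu A < +oo -> forall e : R, (0 < e)%R ->
    exists2 S, measurable S /\ A `<=` S & - e%:E <= \int[mu]_(x in S) f x) ->
  0 <= \int[mu]_x f x.
Proof.
move=> loc; have mabsf : measurable_fun setT (fun x => `|f x|).
  by apply: measurableT_comp => //; case/integrableP: intf.
have fG : \int[mu]_x `|f x| \is a fin_num.
  by rewrite ge0_fin_numE ?integral_ge0 //; case/integrableP: intf.
have fI : \int[mu]_x f x \is a fin_num by exact: integrable_fin_num.
suff : \int[mu]_x `|f x| <= \int[mu]_x `|f x| + \int[mu]_x f x.
  by rewrite -(fineK fG) -(fineK fI) -EFinD !lee_fin; lra.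
apply: ge0_integral_le_of_finite_sets => // A mA muA.
apply/lee_addgt0Pr => e e0; have [S [mS AS] eJ] := loc A mA muA e e0.
have fJ : \int[mu]_(x in S) f x \is a fin_num.
  by apply: integrable_fin_num => //; exact: integrableS intf.
have fA : \int[mu]_(x in A) `|f x| \is a fin_num.
  rewrite ge0_fin_numE ?integral_ge0 //.
  apply: le_lt_trans (integrableP _ _ _ intf).2.
  exact: ge0_subset_integral.
move: eJ (integral_abs_restrict_le intf mA mS AS).
rewrite -(fineK fG) -(fineK fI) -(fineK fJ) -(fineK fA) -EFinN -EFinB /=.
rewrite -!EFinD !lee_fin.
have := ler_norm (fine (\int[mu]_(x in S) f x) - fine (\int[mu]_x f x)).
rewrite distrC; lra.
Qed.

End sigma_finite_integral.

Lemma iter_cancel {T : Type} {f g : T -> T} n :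
  cancel f g -> cancel (iter n f) (iter n g).
Proof. by move=> fK; elim: n => [|n IH] x //=; rewrite -iterS iterSr fK IH. Qed.

Definition never_return {X : Type} (U : X -> X) (A : set X) : set X :=
  A `\` \bigcup_n (iter n.+1 U @^-1` A).

Section preimage.
Context {d : measure_display} {X : measurableType d}.

Lemma measurable_preimage {U : X -> X} {B : set X} :
  measurable_fun setT U -> measurable B -> measurable (U @^-1` B).
Proof. by move=> mU mB; rewrite -[_ @^-1` _]setTI; exact: mU. Qed.

Lemma measurable_fun_iter {U : X -> X} n :
  measurable_fun setT U -> measurable_fun setT (iter n U).
Proof.
move=> mU; elim: n => [|n IH]; first exact: measurable_id.
by rewrite iterfS; exact: measurableT_comp.
Qed.

Lemma measurable_never_return {U : X -> X} {A : set X} :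
  measurable_fun setT U -> measurable A -> measurable (never_return U A).
Proof.
move=> mU mA; apply: (measurableD mA); apply: bigcupT_measurable => n.
exact/measurable_preimage/mA/measurable_fun_iter.
Qed.

End preimage.

Section conservative_recurrence.
Local Open Scope ereal_scope.
Context {d : measure_display} {X : measurableType d} {R : realType}.
Context {mu : {measure set X -> \bar R}} {T : X -> X}.
Hypotheses (mT : measurable_fun setT T) (consT : conservative mu T).

Lemma conservative_wandering_null B : measurable B ->
  (forall n x, (0 < n)%N -> B x -> ~ B (iter n T x)) -> mu B = 0.
Proof.
move=> mB wB; apply/eqP; rewrite eq_le measure_ge0 andbT leNgt; apply/negP.
move=> /(consT _ mB)[n [n0]]; rewrite (_ : _ `&` _ = set0) ?measure0 ?ltxx //.
by apply/seteqP; split => // x [/= BTnx Bx]; exact: wB n0 Bx BTnx.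
Qed.

Lemma conservative_recurrent A : measurable A -> mu (never_return T A) = 0.
Proof.
move=> mA; apply: conservative_wandering_null.
  exact: measurable_never_return.
by move=> [//|n] x _ [_ noret] [ATx _]; apply: noret; exists n.
Qed.

Context {Tinv : X -> X}.
Hypotheses (TK : cancel T Tinv) (mTinv : measurable_fun setT Tinv).

Lemma conservative_recurrent_inv A : measurable A ->
  mu (never_return Tinv A) = 0.
Proof.
move=> mA; apply: conservative_wandering_null.
  exact: measurable_never_return.
move=> [//|n] x _ [Ax _] [_ noret]; apply: noret; exists n => //.
by have := iter_cancel n.+1 TK x; rewrite /preimage => /= ->.
Qed.

End conservative_recurrence.

Fixpoint hit_within {X : Type} (U : X -> X) (A : set X) (n : nat) : set X :=
  if n is k.+1 then A `|` U @^-1` hit_within U A k else A.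

Section hit_within.
Local Open Scope ereal_scope.
Context {d : measure_display} {X : measurableType d} {R : realType}.
Context {m : {measure set X -> \bar R}} {U : X -> X}.
Hypothesis mU : measurable_fun setT U.
Implicit Type A : set X.

Lemma sub_hit_within A n : A `<=` hit_within U A n.
Proof. by case: n => [|n] x Ax //=; left. Qed.

Lemma hit_within_iter A n x : A (iter n U x) -> hit_within U A n x.
Proof. by elim: n x => [|n IH] x //=; rewrite -iterS iterSr => /IH; right. Qed.

Lemma hit_withinS A n : hit_within U A n `<=` hit_within U A n.+1.
Proof. by elim: n => [|n IH] x /=; [left | case=> [|/IH]; [left | right]]. Qed.

Lemma measurable_hit_within A n : measurable A -> measurable (hit_within U A n).
Proof.
by move=> mA; elim: n => [|n IH] //=; exact/measurableU/measurable_preimage/IH.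
Qed.

Lemma hit_within_finite A n :
  (forall B, measurable B -> m B < +oo -> m (U @^-1` B) < +oo) ->
  measurable A -> m A < +oo -> m (hit_within U A n) < +oo.
Proof.
move=> finU mA mAoo; elim: n => [|n IH] //=.
have mH := measurable_hit_within _ n mA.
apply: le_lt_trans (measureU2 m mA (measurable_preimage mU mH)) _.
by rewrite lte_add_pinfty // finU.
Qed.

Lemma measure_hit_within_le A n : measurable A ->
  m (hit_within U A n) <=
  m (U @^-1` hit_within U A n) + m (A `\` U @^-1` hit_within U A n).
Proof.
move=> mA; have mH := measurable_hit_within _ n mA.
have mUH := measurable_preimage mU mH.
apply: le_trans (measureU2 _ mUH (measurableD mA mUH)).
apply: le_measure; rewrite ?inE; first exact: mH.
  exact: measurableU mUH (measurableD mA mUH).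
move=> x /hit_withinS /= [Ax|]; last by left.
by have [?|?] := pselect ((U @^-1` hit_within U A n) x); [left | right].
Qed.

Lemma hit_within_escape_cvg0 A : measurable A -> m A < +oo ->
  m (never_return U A) = 0 ->
  m (A `\` U @^-1` hit_within U A n) @[n --> \oo] --> 0.
Proof.
move=> mA mAoo norec; set F := fun n => A `\` U @^-1` hit_within U A n.
have mF n : measurable (F n).
  exact/(measurableD mA)/measurable_preimage/measurable_hit_within.
have niF : nonincreasing_seq F.
  apply/nonincreasing_seqP => n; rewrite subsetEset => x [Ax nUx].
  by split=> // /hit_withinS.
have F0oo : m (F 0%N) < +oo.
  by apply: le_lt_trans mAoo; apply: le_measure; rewrite ?inE // => x [].
suff <- : m (\bigcap_n F n) = 0.
  exact: nonincreasing_cvg_mu F0oo mF (bigcapT_measurable mF) niF.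
have mNoRec := measurable_never_return mU mA.
apply: (subset_measure0 (bigcapT_measurable mF) mNoRec _ norec) => x Fx.
split; first by case: (Fx 0%N I).
case=> n _ /= AUx; case: (Fx n I) => _; apply.
by apply: hit_within_iter; rewrite -iterSr.
Qed.

Lemma hit_within_almost_invariant A (e : R) : measurable A -> m A < +oo ->
  m (never_return U A) = 0 -> (0 < e)%R ->
  exists n, m (hit_within U A n) <= m (U @^-1` hit_within U A n) + e%:E.
Proof.
move=> mA mAoo norec e0.
have [N _ escN] :
    \forall n \near \oo, m (A `\` U @^-1` hit_within U A n) < e%:E.
  have /fine_cvgP[escfin /cvgr_lt/(_ e e0) esclt] :=
    hit_within_escape_cvg0 _ mA mAoo norec.
  by apply: filterS2 escfin esclt => n /fineK <-.
exists N; apply: le_trans (measure_hit_within_le _ N mA) _.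
by apply/leeD2l/ltW/escN => /=.
Qed.

End hit_within.

Section nonsingular_map.
Local Open Scope ereal_scope.
Context {d : measure_display} {X : measurableType d} {R : realType}.
Context {mu : {sigma_finite_measure set X -> \bar R}} {T Tinv : X -> X}
  {Tprime : X -> \bar R}.
Let f x := Tprime x - 1%:E.
Let G := \int[mu]_x `|f x|.
Hypotheses (TK : cancel T Tinv) (mT : measurable_fun setT T)
  (mTinv : measurable_fun setT Tinv)
  (nsT : forall A, measurable A -> mu (T @^-1` A) = 0 <-> mu A = 0)
  (RN : is_RN_deriv (pushforward mu T) mu Tprime)
  (intf : mu.-integrable setT f) (consT : conservative mu T).

Let mTprime : measurable_fun setT Tprime. Proof. by case: RN. Qed.
Let Tprime_ge0 x : 0 <= Tprime x. Proof. by case: RN. Qed.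
Let measure_preimageE B : measurable B ->
  mu (T @^-1` B) = \int[mu]_(x in B) Tprime x.
Proof. by case: RN => _ _; apply. Qed.
Let mf : measurable_fun setT f. Proof. by case/integrableP: intf. Qed.
Let mabsf : measurable_fun setT (fun x => `|f x|).
Proof. exact: measurableT_comp. Qed.

Let G_fin_num : G \is a fin_num.
Proof. by rewrite ge0_fin_numE ?integral_ge0 //; case/integrableP: intf. Qed.

Let lty_addG x : x < +oo -> x + G < +oo.
Proof. by move=> xoo; rewrite lte_add_pinfty // ltey_eq G_fin_num. Qed.

Let integral_abs_le B : measurable B -> \int[mu]_(x in B) `|f x| <= G.
Proof. by move=> mB; apply: ge0_subset_integral. Qed.

Lemma measure_preimage_le B : measurable B -> mu (T @^-1` B) <= mu B + G.
Proof.
move=> mB; have mTpB := measurable_funS measurableT (@subsetT _ B) mTprime.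
have mabsfB := measurable_funS measurableT (@subsetT _ B) mabsf.
rewrite measure_preimageE //.
apply: (@le_trans _ _ (\int[mu]_(x in B) (1 + `|f x|))).
  apply: ge0_le_integral => //; first exact: emeasurable_funD.
  move=> x _; rewrite /f; case: (Tprime x) (Tprime_ge0 x) => [r r0| _ |//] //=.
  by rewrite lee_fin; have := ler_norm (r - 1); lra.
by rewrite ge0_integralD // integral_cst // mul1e; apply/leeD2l/integral_abs_le.
Qed.

Lemma measure_le_preimage B : measurable B -> mu B <= mu (T @^-1` B) + G.
Proof.
move=> mB; have mTpB := measurable_funS measurableT (@subsetT _ B) mTprime.
have mabsfB := measurable_funS measurableT (@subsetT _ B) mabsf.
rewrite measure_preimageE //.
apply: (@le_trans _ _ (\int[mu]_(x in B) (Tprime x + `|f x|))).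
  rewrite -[mu B]mul1e -integral_cst //; apply: ge0_le_integral => //.
    exact: emeasurable_funD.
  move=> x _; rewrite /f; case: (Tprime x) (Tprime_ge0 x) => [r r0| _ |//] /=.
    by rewrite lee_fin; have := ler_norm (1 - r); rewrite distrC; lra.
  by rewrite addye ?leey.
by rewrite ge0_integralD //; apply/leeD2l/integral_abs_le.
Qed.

Lemma integral_Tprime_sub1 S : measurable S -> mu S < +oo ->
  \int[mu]_(x in S) f x = mu (T @^-1` S) - mu S.
Proof.
move=> mS muS; have int1 := integrable_cst_lty _ 1 mS muS.
rewrite measure_preimageE // [in RHS](eq_integral (fun x => f x + cst 1%:E x)).
  rewrite integralD //; last exact: integrableS intf.
  by rewrite integral_cst // mul1e addeK // ge0_fin_numE.
by move=> x _; rewrite /f subeK.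
Qed.

Let preimage_lty B : measurable B -> mu B < +oo -> mu (T @^-1` B) < +oo.
Proof.
move=> mB muB.
exact: le_lt_trans (measure_preimage_le _ mB) (lty_addG _ muB).
Qed.

Lemma integral_Tprime_sub1_ge0 : 0 <= \int[mu]_x f x.
Proof.
apply: (integral_ge0_of_localization intf) => A mA muA e e0.
have [n hitn] := hit_within_almost_invariant mT A e mA muA
  (conservative_recurrent mT consT A mA) e0.
have mS := measurable_hit_within mT A n mA.
have muS := hit_within_finite mT A n preimage_lty mA muA.
exists (hit_within T A n); first by split=> //; exact: sub_hit_within.
by rewrite integral_Tprime_sub1 // leeBrDr ?ge0_fin_numE // addeC leeBlDr.
Qed.

Let preimageTK B : T @^-1` (Tinv @^-1` B) = B.
Proof. by apply/seteqP; split=> x /=; rewrite TK. Qed.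

Let preimage_inv_lty B : measurable B -> mu (T @^-1` B) < +oo ->
  mu (T @^-1` (Tinv @^-1` B)) < +oo.
Proof.
move=> mB TBoo; rewrite preimageTK.
exact: le_lt_trans (measure_le_preimage _ mB) (lty_addG _ TBoo).
Qed.

(* The argument of [integral_Tprime_sub1_ge0], run for [Tinv] and the measure
   [B |-> mu (T @^-1` B)]. *)
Lemma integral_Tprime_sub1_le0 : \int[mu]_x f x <= 0.
Proof.
rewrite -oppe_ge0 -integralN; last exact: integrable_add_def.
apply: (integral_ge0_of_localization (integrableN intf)) => A mA muA e e0.
have nuA : pushforward mu T A < +oo := preimage_lty _ mA muA.
have norec : pushforward mu T (never_return Tinv A) = 0.
  exact: (nsT _ (measurable_never_return mTinv mA)).2
    (conservative_recurrent_inv consT TK mTinv A mA).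
have [n hitn] : exists n, mu (T @^-1` hit_within Tinv A n) <=
    mu (T @^-1` (Tinv @^-1` hit_within Tinv A n)) + e%:E.
  exact: (hit_within_almost_invariant (m := pushforward mu T) mTinv A e mA nuA
    norec e0).
have mS := measurable_hit_within mTinv A n mA.
have TSoo : mu (T @^-1` hit_within Tinv A n) < +oo.
  exact: (hit_within_finite (m := pushforward mu T) mTinv A n preimage_inv_lty
    mA nuA).
have muS : mu (hit_within Tinv A n) < +oo.
  exact: le_lt_trans (measure_le_preimage _ mS) (lty_addG _ TSoo).
exists (hit_within Tinv A n); first by split=> //; exact: sub_hit_within.
rewrite integralN; last first.
  by apply: integrable_add_def => //; exact: integrableS intf.
rewrite preimageTK in hitn.
by rewrite (integral_Tprime_sub1 _ mS muS) leeN2 leeBlDr ?ge0_fin_numE // addeC.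
Qed.

End nonsingular_map.

Theorem proposition4p4 (d : measure_display) (X : measurableType d)
  (R : realType) (mu : {sigma_finite_measure set X -> \bar R})
  (T Tinv : X -> X) (Tprime : X -> \bar R) :
  standard_space X R ->
  non_atomic mu ->
  invertible_nonsingular mu T Tinv ->
  is_RN_deriv (pushforward mu T) mu Tprime ->
  mu.-integrable [set: X] (fun x => Tprime x - 1%:E)%E ->
  conservative mu T ->
  (\int[mu]_x (Tprime x - 1%:E))%E = 0%E.
Proof.
move=> _ _ [TK _ mT mTinv nsT] RN intf consT; apply/eqP; rewrite eq_le.
by rewrite (integral_Tprime_sub1_le0 TK mT mTinv nsT RN intf consT)
  (integral_Tprime_sub1_ge0 mT RN intf consT).
Qed.
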